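(* Let $X$ be a small category. The forgetful functor $U:\mathbf{Cat}/\!/X\to\mathbf{Cat}$, $(W,a)\mapsto W$, $(f,\gamma)\mapsto f$, is topological if and only if $X$ is a complete lattice (i.e. $X$ is a preorder in which every subset has an infimum, equivalently, up to equivalence, a complete lattice regarded as a category).
   Context: $\mathbf{Cat}$ denotes the category of small categories and functors. The lax comma category $\mathbf{Cat}/\!/X$ has as objects pairs $(W,a)$ with $W$ a small category and $a:W\to X$ a functor; a morphism $(f,\gamma):(W,a)\to(Y,b)$ consists of a functor $f:W\to Y$ and a natural transformation $\gamma:a\Rightarrow b\circ f$. The composite of $(f,\gamma):(W,a)\to(Y,b)$ and $(g,\chi):(Y,b)\to(Z,c)$ is $(g\circ f,(\chi * f)\cdot\gamma)$, where $(\chi * f)_w=\chi_{f(w)}$, and the identity on $(W,a)$ is $(\mathrm{id}_W,\mathrm{id}_a)$. A (not necessarily faithful) functor $U:\mathcal{A}\to\mathcal{B}$ is topological if every $U$-structured cone has a $U$-initial lift: for every diagram $D:I\to\mathcal{A}$ indexed by a possibly large category $I$ and every cone $\beta:B\Rightarrow U\circ D$ in $\mathcal{B}$, there exist an object $A$ with $U(A)=B$ and a cone $\alpha:A\Rightarrow D$ with $U\alpha=\beta$ such that for every cone $\alpha':A'\Rightarrow D$ and every morphism $g:U(A')\to B$ with $\beta\circ g=U\alpha'$ there is a unique $h:A'\to A$ with $U(h)=g$ and $\alpha\circ h=\alpha'$. *)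

From Stdlib Require Import FunctionalExtensionality.

Set Universe Polymorphism.
Set Primitive Projections.
Set Implicit Arguments.

(* Proof-irrelevant box for the laws of functors / natural transformations,
   so that functors (resp. natural transformations) are equal as soon as their
   object and morphism maps (resp. components) are equal. *)
Inductive Squash (P : Prop) : SProp := squash : P -> Squash P.

Record Category := {
  Ob :> Type;
  Hom : Ob -> Ob -> Type;
  idm : forall a, Hom a a;
  cmp : forall a b c, Hom b c -> Hom a b -> Hom a c;
  cmp_assoc : forall a b c d (h : Hom c d) (g : Hom b c) (f : Hom a b),
      cmp h (cmp g f) = cmp (cmp h g) f;
  cmp_idl : forall a b (f : Hom a b), cmp (idm b) f = f;
  cmp_idr : forall a b (f : Hom a b), cmp f (idm a) = f
}.
Arguments Hom {C} : rename.
Arguments idm {C} : rename.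
Arguments cmp {C a b c} : rename.

Record Functor (C D : Category) := {
  fobj : C -> D;
  fmor : forall a b, Hom a b -> Hom (fobj a) (fobj b);
  fmor_id : Squash (forall a : C, fmor a a (idm a) = idm (fobj a));
  fmor_cmp : Squash (forall a b c : C, forall (g : Hom b c) (f : Hom a b),
      fmor a c (cmp g f) = cmp (fmor b c g) (fmor a b f))
}.
Arguments fobj {C D}.
Arguments fmor {C D} f {a b} : rename.

Definition IdF (C : Category) : Functor C C.
Proof.
  refine {| fobj := fun x => x; fmor := fun a b f => f |}.
  - constructor; reflexivity.
  - constructor; reflexivity.
Defined.

Definition CompF (C D E : Category) (G : Functor D E) (F : Functor C D)
  : Functor C E.
Proof.
  refine {| fobj := fun x => fobj G (fobj F x);
            fmor := fun a b f => fmor G (fmor F f) |}.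
  - destruct (fmor_id F) as [HF]; destruct (fmor_id G) as [HG].
    constructor; intro a; rewrite HF; apply HG.
  - destruct (fmor_cmp F) as [HF]; destruct (fmor_cmp G) as [HG].
    constructor; intros; rewrite HF; apply HG.
Defined.

Record NatTrans (C D : Category) (F G : Functor C D) := {
  tcomp : forall x, Hom (fobj F x) (fobj G x);
  tnat : Squash (forall x y (u : Hom x y),
      cmp (fmor G u) (tcomp x) = cmp (tcomp y) (fmor F u))
}.
Arguments tcomp {C D F G}.

Lemma NatTrans_eq (C D : Category) (F G : Functor C D) (s t : NatTrans F G) :
  (forall x, tcomp s x = tcomp t x) -> s = t.
Proof.
  intro H. apply functional_extensionality_dep in H.
  destruct s as [s Hs], t as [t Ht]. cbn in H. subst. reflexivity.
Qed.

Definition IdT (C D : Category) (F : Functor C D) : NatTrans F F.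
Proof.
  refine {| tcomp := fun x => idm (fobj F x) |}.
  constructor; intros. rewrite cmp_idl, cmp_idr; reflexivity.
Defined.

Definition VCompT (C D : Category) (F G H : Functor C D)
  (mu : NatTrans G H) (eta : NatTrans F G) : NatTrans F H.
Proof.
  refine {| tcomp := fun x => cmp (tcomp mu x) (tcomp eta x) |}.
  destruct (tnat mu) as [Nm]; destruct (tnat eta) as [Ne].
  constructor; intros.
  rewrite cmp_assoc, Nm, <- cmp_assoc, Ne, cmp_assoc; reflexivity.
Defined.

Definition WhiskT (B C D : Category) (G H : Functor C D)
  (chi : NatTrans G H) (f : Functor B C) : NatTrans (CompF G f) (CompF H f).
Proof.
  refine (@Build_NatTrans _ _ (CompF G f) (CompF H f)
            (fun w => tcomp chi (fobj f w)) _).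
  destruct (tnat chi) as [N]. constructor; intros; cbn; apply N.
Defined.

Definition Cat : Category.
Proof.
  refine {| Ob := Category; Hom := Functor; idm := IdF; cmp := CompF |};
    reflexivity.
Defined.

Record LObj (X : Category) := { lw : Category; la : Functor lw X }.
Arguments lw {X}. Arguments la {X}.

Record LMor (X : Category) (A B : LObj X) := {
  lf : Functor (lw A) (lw B);
  lg : NatTrans (la A) (CompF (la B) lf)
}.
Arguments lf {X A B}. Arguments lg {X A B}.

Definition LId (X : Category) (A : LObj X) : LMor A A :=
  {| lf := IdF (lw A); lg := IdT (la A) |}.

Definition LCmp (X : Category) (A B C : LObj X)
  (m2 : LMor B C) (m1 : LMor A B) : LMor A C :=
  {| lf := CompF (lf m2) (lf m1);
     lg := VCompT (WhiskT (lg m2) (lf m1)) (lg m1) |}.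

Lemma LMor_eq (X : Category) (A B : LObj X) (f : Functor (lw A) (lw B))
  (s t : NatTrans (la A) (CompF (la B) f)) :
  s = t -> {| lf := f; lg := s |} = {| lf := f; lg := t |}.
Proof. intros ->; reflexivity. Qed.

Definition LaxSlice (X : Category) : Category.
Proof.
  refine {| Ob := LObj X; Hom := @LMor X; idm := @LId X; cmp := @LCmp X |}.
  - intros. apply LMor_eq, NatTrans_eq; intro; cbn.
    rewrite !cmp_assoc; reflexivity.
  - intros. apply LMor_eq, NatTrans_eq; intro; cbn. apply cmp_idl.
  - intros. apply LMor_eq, NatTrans_eq; intro; cbn. apply cmp_idr.
Defined.

Definition ForgetLax (X : Category) : Functor (LaxSlice X) Cat.
Proof.
  refine (@Build_Functor (LaxSlice X) Cat (fun A : LObj X => lw A)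
            (fun A B (m : LMor A B) => lf m) _ _);
    constructor; reflexivity.
Defined.

Definition is_cone (I C : Category) (D : Functor I C) (c : C)
  (alpha : forall i, Hom c (fobj D i)) : Prop :=
  forall i j (u : Hom i j), cmp (fmor D u) (alpha i) = alpha j.

Definition is_U_initial (A B : Category) (U : Functor A B) (I : Category)
  (D : Functor I A) (A0 : A) (alpha : forall i, Hom A0 (fobj D i)) : Prop :=
  forall (A' : A) (alpha' : forall i, Hom A' (fobj D i))
         (g : Hom (fobj U A') (fobj U A0)),
    is_cone D A' alpha' ->
    (forall i, cmp (fmor U (alpha i)) g = fmor U (alpha' i)) ->
    exists! h : Hom A' A0, fmor U h = g /\ forall i, cmp (alpha i) h = alpha' i.

(* Topological functor: every U-structured cone (indexed by a category I as
   large as A itself) has a U-initial lift. *)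
Definition topological@{u v} (A B : Category@{u v}) (U : Functor A B) : Prop :=
  forall (I : Category@{u v}) (D : Functor I A) (B0 : B)
         (beta : forall i, Hom B0 (fobj U (fobj D i))),
    is_cone (CompF U D) B0 beta ->
    exists (A0 : A) (alpha : forall i, Hom A0 (fobj D i))
           (e : fobj U A0 = B0),
      is_cone D A0 alpha /\
      (forall i, eq_rect (fobj U A0) (fun y => Hom y (fobj U (fobj D i)))
                   (fmor U (alpha i)) B0 e = beta i) /\
      is_U_initial U D A0 alpha.

Definition is_preorder (X : Category) : Prop :=
  forall (a b : X) (f g : Hom a b), f = g.

Definition is_infimum (X : Category) (S : X -> Prop) (m : X) : Prop :=
  (forall s, S s -> inhabited (Hom m s)) /\
  (forall l, (forall s, S s -> inhabited (Hom l s)) -> inhabited (Hom l m)).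

Definition is_complete_lattice (X : Category) : Prop :=
  is_preorder X /\ forall S : X -> Prop, exists m : X, @is_infimum X S m.

(* Lifting the discrete cone of identities 1 => 1 over a family of one-point
   objects (1, x_t) of Cat//X yields an object of X together with
   projections through which every cone over the x_t factors: X has weak
   products of all families, even those indexed by its own collection of
   morphisms.  By Freyd's diagonal argument this forces X to be a preorder,
   and then weak products are infima.  Conversely, if X is a complete lattice,
   the initial lift of a cone beta_i : B => W_i is B equipped with the
   pointwise infimum of the a_i (beta_i b); since X is thin, every required
   equation of natural transformations holds automatically. *)

From Stdlib Require Import FunctionalExtensionality ClassicalEpsilon Classical Eqdep.

Set Universe Polymorphism.
Unset Universe Minimization ToSet.
Set Primitive Projections.
Set Implicit Arguments.

Definition pick (A : Type) (H : inhabited A) : A := epsilon H (fun _ => True).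

Lemma cantor_not_injective (K : Type) (Phi : (K -> bool) -> K) :
  ~ (forall c1 c2, Phi c1 = Phi c2 -> c1 = c2).
Proof.
  intro Hinj.
  pose (c0 := fun k => if excluded_middle_informative
                (exists chi, Phi chi = k /\ chi k = false) then true else false).
  assert (Hc0 : forall k, c0 k = true <-> exists chi, Phi chi = k /\ chi k = false).
  { intro k; unfold c0; destruct excluded_middle_informative; split; intros;
      auto; try discriminate; contradiction. }
  destruct (c0 (Phi c0)) eqn:E.
  - destruct (proj1 (Hc0 _) E) as (chi & E1 & E2).
    apply Hinj in E1; subst chi; congruence.
  - assert (c0 (Phi c0) = true) by (apply Hc0; exists c0; auto).
    congruence.
Qed.

Definition has_weak_product (X : Category) (T : Type) (x : T -> X) : Prop :=
  exists (m : X) (p : forall t, Hom m (x t)),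
    forall (z : X) (q : forall t, Hom z (x t)),
      exists h : Hom z m, forall t, cmp (p t) h = q t.
Arguments has_weak_product {X T} x.

Section WeakProducts.
Variable X : Category.
Hypothesis weak_prod : forall (T : Type) (x : T -> X), has_weak_product x.

(* Freyd: two distinct parallel arrows a -> b give 2^K distinct arrows into a
   weak K-th power of b, which is impossible when K is the type of all arrows
   of X. *)
Lemma weak_products_preorder : is_preorder X.
Proof.
  intros a b f g. apply NNPP; intro Hne.
  pose (K := {a : X & {b : X & Hom a b}}).
  destruct (@weak_prod K (fun _ => b)) as (m & p & Hp).
  assert (Hh : forall chi : K -> bool, exists h : Hom a m,
             forall k, cmp (p k) h = if chi k then f else g)
    by (intro chi; apply Hp).
  pose (h := fun chi => proj1_sig (constructive_indefinite_description _ (Hh chi))).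
  assert (Hhp : forall chi k, cmp (p k) (h chi) = if chi k then f else g)
    by (intro chi; exact (proj2_sig (constructive_indefinite_description _ (Hh chi)))).
  apply (@cantor_not_injective K (fun chi => existT _ a (existT _ m (h chi)))).
  intros c1 c2 E.
  apply inj_pair2, inj_pair2 in E.
  apply functional_extensionality; intro k.
  pose proof (Hhp c1 k) as E1; pose proof (Hhp c2 k) as E2.
  rewrite E, E2 in E1.
  destruct (c1 k), (c2 k); auto; exfalso; apply Hne; auto.
Qed.

Lemma weak_products_infimum (S : X -> Prop) : exists m, @is_infimum X S m.
Proof.
  destruct (@weak_prod {s : X | S s} (@proj1_sig _ _)) as (m & p & Hp).
  exists m; split.
  - intros s Hs; exact (inhabits (p (exist _ s Hs))).
  - intros l Hl.
    destruct (Hp l (fun t => pick (Hl (proj1_sig t) (proj2_sig t)))) as [h _].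
    exact (inhabits h).
Qed.

End WeakProducts.

Lemma weak_products_complete_lattice (X : Category) :
  (forall (T : Type) (x : T -> X), has_weak_product x) -> is_complete_lattice X.
Proof.
  intro weak_prod; split.
  - exact (weak_products_preorder weak_prod).
  - exact (weak_products_infimum weak_prod).
Qed.

Definition One : Category.
Proof.
  refine {| Ob := unit; Hom := fun _ _ => unit; idm := fun _ => tt;
            cmp := fun _ _ _ _ _ => tt |}.
  - reflexivity.
  - intros a b []; reflexivity.
  - intros a b []; reflexivity.
Defined.

Lemma functor_into_One_eq (C : Category) (F G : Functor C One) : F = G.
Proof.
  destruct F as [f1 m1 i1 c1], G as [f2 m2 i2 c2].
  assert (f1 = f2) by (apply functional_extensionality; intro x;
    destruct (f1 x), (f2 x); reflexivity).
  subst f2.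
  assert (m1 = m2).
  { apply functional_extensionality_dep; intro a;
    apply functional_extensionality_dep; intro b;
    apply functional_extensionality_dep; intro u; cbn in *.
    destruct (m1 a b u), (m2 a b u); reflexivity. }
  subst m2; reflexivity.
Qed.

Definition Disc (T : Type) : Category.
Proof.
  refine {| Ob := T; Hom := fun a b => a = b; idm := fun a => eq_refl;
            cmp := fun a b c g f => eq_trans f g |}.
  - intros; destruct h, g, f; reflexivity.
  - intros; destruct f; reflexivity.
  - intros; destruct f; reflexivity.
Defined.

Definition Const (C X : Category) (x : X) : Functor C X.
Proof.
  refine {| fobj := fun _ => x; fmor := fun _ _ _ => idm x |}.
  - constructor; reflexivity.
  - constructor; intros; rewrite cmp_idl; reflexivity.
Defined.

Definition point (X : Category) (x : X) : LObj X :=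
  {| lw := One; la := @Const One X x |}.
Arguments point {X} x.

Definition point_family (X : Category) (T : Type) (x : T -> X) :
  Functor (Disc T) (LaxSlice X).
Proof.
  refine (@Build_Functor (Disc T) (LaxSlice X) (fun t : T => point (x t))
            (fun a b (e : a = b) =>
              match e in _ = b' return LMor (point (x a)) (point (x b')) with
              | eq_refl => LId (point (x a)) end) _ _).
  - constructor; reflexivity.
  - constructor; intros a b c g f; destruct g, f; cbn.
    symmetry; exact (cmp_idl (LaxSlice X) _ _ (LId (point (x a)))).
Defined.
Arguments point_family {X T} x.

Definition point_mor (X : Category) (z y : X) (q : Hom z y) :
  LMor (point z) (point y).
Proof.
  refine (@Build_LMor X (point z) (point y) (IdF One)
            (@Build_NatTrans One X (la (point z)) (CompF (la (point y)) (IdF One))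
               (fun _ => q) _)).
  constructor; intros; cbn. rewrite cmp_idl, cmp_idr; reflexivity.
Defined.
Arguments point_mor {X z y} q.

(* The lifted object lives over One; its value at the unique point is the weak
   product, and a cone of points factors through it by U-initiality. *)
Lemma topological_weak_product (X : Category) (T : Type) (x : T -> X) :
  topological (ForgetLax X) -> has_weak_product x.
Proof.
  intro Htop.
  destruct (Htop (Disc T) (point_family x) One (fun _ => IdF One)) as
    (A0 & alpha & e & _ & _ & Hinit).
  { intros i j u; apply functor_into_One_eq. }
  assert (t0 : lw A0) by (cbn in e; rewrite e; exact tt).
  exists (fobj (la A0) t0), (fun t => tcomp (lg (alpha t)) t0 : Hom _ (x t)).
  intros z q.
  destruct (Hinit (point z) (fun t => point_mor (q t)) (Const One (lw A0) t0))
    as [[fH gH] [[Hf Hc] _]].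
  - intros i j u; destruct u; cbn.
    exact (cmp_idl (LaxSlice X) _ _ (point_mor (q i))).
  - intro i; apply functor_into_One_eq.
  - cbn in Hf; subst fH.
    exists (tcomp gH tt); intro t.
    exact (f_equal (fun M : LMor (point z) (point (x t)) => tcomp (lg M) tt : Hom z (x t))
             (Hc t)).
Qed.

Lemma topological_complete_lattice (X : Category) :
  topological (ForgetLax X) -> is_complete_lattice X.
Proof.
  intro Htop; apply weak_products_complete_lattice.
  intros T x; exact (topological_weak_product x Htop).
Qed.

Lemma preorder_LMor_eq (X : Category) (HX : is_preorder X) (A B : LObj X)
  (m1 m2 : LMor A B) : lf m1 = lf m2 -> m1 = m2.
Proof.
  destruct m1 as [f1 s], m2 as [f2 t]; cbn; intros ->.
  apply LMor_eq, NatTrans_eq; intro; apply HX.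
Qed.

Section InitialLift.
Variable X : Category.
Hypothesis HX : is_preorder X.
Variable inf : (X -> Prop) -> X.
Hypothesis infP : forall S, @is_infimum X S (inf S).
Variables (I : Category) (D : Functor I (LaxSlice X)) (B0 : Category)
  (beta : forall i, Functor B0 (lw (fobj D i))).

Definition fibre_values (b : B0) : X -> Prop :=
  fun s => exists i, s = fobj (la (fobj D i)) (fobj (beta i) b).

Definition lift_proj (b : B0) (i : I) :
  Hom (inf (fibre_values b)) (fobj (la (fobj D i)) (fobj (beta i) b)) :=
  pick (proj1 (infP (fibre_values b)) _ (ex_intro _ i eq_refl)).

Lemma lift_mor_inh (b b' : B0) (f : Hom b b') :
  inhabited (Hom (inf (fibre_values b)) (inf (fibre_values b'))).
Proof.
  apply (proj2 (infP (fibre_values b'))); intros s [i ->].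
  exact (inhabits (cmp (fmor (la (fobj D i)) (fmor (beta i) f)) (lift_proj b i))).
Qed.

Definition lift_functor : Functor B0 X.
Proof.
  refine (@Build_Functor B0 X (fun b => inf (fibre_values b))
            (fun b b' f => pick (lift_mor_inh b b' f)) _ _);
    constructor; intros; apply HX.
Defined.

Definition lift_obj : LObj X := {| lw := B0; la := lift_functor |}.

Definition lift_cone (i : I) : LMor lift_obj (fobj D i).
Proof.
  refine (@Build_LMor X lift_obj (fobj D i) (beta i)
            (@Build_NatTrans B0 X lift_functor (CompF (la (fobj D i)) (beta i))
               (fun b => lift_proj b i) _)).
  constructor; intros; apply HX.
Defined.

Hypothesis beta_cone : is_cone (CompF (ForgetLax X) D) B0 beta.

Lemma lift_cone_is_cone : is_cone D lift_obj lift_cone.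
Proof. intros i j u; apply preorder_LMor_eq; [exact HX | exact (beta_cone i j u)]. Qed.

(* The comparison natural transformation a' => lift_functor g exists because
   each a' w lies below every a_i (beta_i (g w)) via the components of alpha'. *)
Lemma lift_cone_initial : is_U_initial (ForgetLax X) D lift_obj lift_cone.
Proof.
  intros A' alpha' g _ Hg.
  assert (dinh : forall w, inhabited (Hom (fobj (la A') w) (fobj lift_functor (fobj g w)))).
  { intro w; apply (proj2 (infP _)); intros s [i ->].
    assert (Hw : fobj (lf (alpha' i)) w = fobj (beta i) (fobj g w))
      by (symmetry; exact (f_equal (fun F : Functor _ _ => fobj F w) (Hg i))).
    pose proof (tcomp (lg (alpha' i)) w) as c; cbn in c; rewrite Hw in c.
    exact (inhabits c). }
  unshelve eexists (@Build_LMor X A' lift_obj g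
     (@Build_NatTrans _ _ (la A') (CompF lift_functor g) (fun w => pick (dinh w)) _)).
  { constructor; intros; apply HX. }
  split; [split|].
  - reflexivity.
  - intro i; apply preorder_LMor_eq; [exact HX | exact (Hg i)].
  - intros h' [Hh' _]; apply preorder_LMor_eq; [exact HX | symmetry; exact Hh'].
Qed.

End InitialLift.

Lemma complete_lattice_topological (X : Category) :
  is_complete_lattice X -> topological (ForgetLax X).
Proof.
  intros [HX Hinf] I D B0 beta Hbeta.
  pose (inf := fun S => proj1_sig (constructive_indefinite_description _ (Hinf S))).
  assert (infP : forall S, @is_infimum X S (inf S))
    by (intro S; exact (proj2_sig (constructive_indefinite_description _ (Hinf S)))).
  exists (@lift_obj X HX inf infP I D B0 beta),
         (@lift_cone X HX inf infP I D B0 beta), eq_refl.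
  split; [|split].
  - exact (@lift_cone_is_cone X HX inf infP I D B0 beta Hbeta).
  - reflexivity.
  - exact (@lift_cone_initial X HX inf infP I D B0 beta).
Qed.

Unset Universe Polymorphism.

Theorem mainTheorem9 (X : Category) :
  topological (ForgetLax X) <-> is_complete_lattice X.
Proof.
  split; [apply topological_complete_lattice | apply complete_lattice_topological].
Qed.
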